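(* Let $k\ge1$ and let $g$ be a variable of type level $k+2$. If $\Gamma\vdash t$ is $g$-regular and ${\mathrm{PCF}}^\Omega_k$-denotable, then any inductive generation of the denotability of $\Gamma\vdash t$ via the following six rules consists entirely of $g$-regular procedures-in-environment: 1. from denotable $\Gamma\vdash q_i$ ($i<r$) and $x\in\Gamma$, infer $\Gamma\vdash\lambda.\mathtt{case}\ x\,q_0\cdots q_{r-1}\ \mathtt{of}\ (j\Rightarrow j)$; 2. from $\Gamma,x\vdash p$ infer $\Gamma\vdash\lambda x.p$; 3. $\Gamma\vdash\lambda.n$; 4. from $\Gamma\vdash p$ and $f:\mathbb{N}\rightharpoonup\mathbb{N}$ infer $\Gamma\vdash p[i\mapsto f(i)]$; 5. from $\Gamma\vdash p$, $\Gamma\vdash\lambda.d$, $\Gamma\vdash\lambda.e$ infer $\Gamma\vdash p[0\mapsto d,\ i+1\mapsto e]$; 6. from $\Gamma\vdash\lambda z^\sigma x_0^{\sigma_0}\cdots x_{r-1}^{\sigma_{r-1}}.e$ with $\sigma=\sigma_0,\ldots,\sigma_{r-1}\rightarrow\mathbb{N}$ of level $\le k$ and $\Gamma\vdash q_i:\sigma_i$, infer $\Gamma\vdash\lambda.\langle\!\langle\Pi_{\Gamma,Z}(e,\xi)\rangle\!\rangle$ where $Z=z,\vec x$ is disjoint from $\Gamma$, $\xi(z)=\lambda\vec x.e$, $\xi(x_i)=q_i$.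
   Context: Levels: ${\mathrm{lv}}(\mathbb{N})=0$, ${\mathrm{lv}}(\sigma\rightarrow\tau)=\max({\mathrm{lv}}\,\sigma+1,{\mathrm{lv}}\,\tau)$. ${\mathrm{PCF}}^\Omega_k$: simply typed $\lambda$-calculus over $\mathbb{N}$ with $\underline n,\mathit{suc},\mathit{pre},\mathit{ifzero}$, oracle constants $C_f$ ($f:\mathbb{N}\rightharpoonup\mathbb{N}$) and $Y_\sigma$ only for ${\mathrm{lv}}(\sigma)\le k$. NSPs: coinductively generated well-typed trees $p::=\lambda\vec x.e$, $e::=\bot\mid n\mid\mathtt{case}\ a\ \mathtt{of}\ (i\Rightarrow e_i\mid i\in\mathbb{N})$, $a::=x\,q_0\cdots q_{r-1}$, modulo $\alpha$; $\langle\!\langle-\rangle\!\rangle$ is evaluation of meta-terms (limit of reduction by $\beta$, $\mathtt{case}\ \bot\rightsquigarrow\bot$, $\mathtt{case}\ n\ \mathtt{of}(i\Rightarrow E_i)\rightsquigarrow E_n$, case-of-case commutation). A procedure-in-environment $\Gamma\vdash p$ is ${\mathrm{PCF}}^\Omega_k$-denotable if $p=[\![M]\!]_\Gamma$ for a ${\mathrm{PCF}}^\Omega_k$ term $\Gamma\vdash M$ under the standard NSP interpretation ($[\![x]\!]=x^\eta$ with $x^\eta=\lambda\vec z.\mathtt{case}\ x\vec z^{\,\eta}\ \mathtt{of}(i\Rightarrow i)$, $[\![\lambda x.M]\!]=\lambda x.[\![M]\!]$, $[\![MN]\!]=[\![M]\!]\cdot[\![N]\!]$ with $(\lambda x_0\cdots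 x_r.e)\cdot q=\lambda x_1\cdots x_r.\langle\!\langle e[x_0\mapsto q]\rangle\!\rangle$, constants by their standard procedures). $t[i\mapsto e_i]$ replaces each rightward numeral leaf $i$ of $t$ (leaves reached only through $\lambda$-bodies and case branches) by $e_i$. Plugging $\Pi_{\Gamma,Z}(e,\xi)=\bigsqcup_m(\Pi^m)^\circ$ where $\Pi^0=e$, $\Pi^{m+1}=\Pi^m[z\mapsto\xi(z)\ \forall z\in Z]$ and $T^\circ$ replaces each ground subterm $z\vec Q$ ($z\in Z$) by $\bot$. $g$-regular: an environment is $g$-regular if it contains $g$ and otherwise only variables of level $\le k$; a term is $g$-regular if all its free and bound variables are of level $\le k$ except possibly free occurrences of $g$; $\Gamma\vdash t$ is $g$-regular if both are. *)

(* Nested sequential procedures (NSPs) as coinductive trees,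
   with bound variables as (curried) de Bruijn indices and free variables as
   typed atoms ("locally nameless"); meta-terms; evaluation <<->>; the NSP
   interpretation of PCF^Omega_k; the six generation rules; g-regularity. *)
From Stdlib Require Import List Arith Bool ClassicalDescription Relation_Operators.
Import ListNotations.
Set Implicit Arguments.

(* Arrs [s0; ...; s_{r-1}] is s0 -> ... -> s_{r-1} -> N.              *)
Inductive ty : Type := Arrs : list ty -> ty.
Definition tN : ty := Arrs [].
Definition arrow (s t : ty) : ty := match t with Arrs us => Arrs (s :: us) end.

Fixpoint lv (t : ty) : nat :=
  match t with
  | Arrs l => (fix go (l : list ty) : nat :=
                 match l with [] => 0 | s :: l' => Nat.max (S (lv s)) (go l') end) l
  end.

Definition atom : Type := (nat * ty)%type.
Definition aty (a : atom) : ty := snd a.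

(* Variable occurrences: a free atom, or a bound variable given by a de Bruijn
   index (curried convention: in  MLam [t0;..;t_{r-1}] e  the index 0 refers,
   at the top of e, to x_{r-1}, and index r-1 to x_0). *)
Inductive var : Type := Free (a : atom) | Bnd (n : nat).

(* Meta-terms.  NSPs are the meta-terms without HApp / HExp heads.     *)
CoInductive mproc : Type := MLam : list ty -> mexp -> mproc
with mexp : Type :=
  | MBot : mexp
  | MNum : nat -> mexp
  | MCase : mhead -> (nat -> mexp) -> mexp
with mhead : Type :=
  | HVar : var -> margs -> mhead
  | HApp : mproc -> margs -> mhead
  | HExp : mexp -> mhead
with margs : Type :=
  | ANil : margs
  | ACons : mproc -> margs -> margs.

Definition ptype (p : mproc) : ty := match p with MLam ts _ => Arrs ts end.

Fixpoint anth (a : margs) (n : nat) : mproc :=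
  match a, n with
  | ANil, _ => MLam [] MBot
  | ACons p _, 0 => p
  | ACons _ a', S n' => anth a' n'
  end.

Inductive alen : margs -> nat -> Prop :=
  | alen0 : alen ANil 0
  | alenS p a n : alen a n -> alen (ACons p a) (S n).

Definition upren (m : nat) (rho : nat -> nat) (j : nat) : nat :=
  if j <? m then j else rho (j - m) + m.

Definition ren_v (rho : nat -> nat) (v : var) : var :=
  match v with Free a => Free a | Bnd j => Bnd (rho j) end.

CoFixpoint ren_p (rho : nat -> nat) (p : mproc) : mproc :=
  match p with MLam ts e => MLam ts (ren_e (upren (length ts) rho) e) end
with ren_e (rho : nat -> nat) (e : mexp) : mexp :=
  match e with
  | MBot => MBot
  | MNum n => MNum n
  | MCase h br => MCase (ren_h rho h) (fun i => ren_e rho (br i))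
  end
with ren_h (rho : nat -> nat) (h : mhead) : mhead :=
  match h with
  | HVar v a => HVar (ren_v rho v) (ren_a rho a)
  | HApp p a => HApp (ren_p rho p) (ren_a rho a)
  | HExp e => HExp (ren_e rho e)
  end
with ren_a (rho : nat -> nat) (a : margs) : margs :=
  match a with
  | ANil => ANil
  | ACons p a' => ACons (ren_p rho p) (ren_a rho a')
  end.

Definition shift_p (m : nat) : mproc -> mproc := ren_p (fun j => j + m).
Definition shift_e (m : nat) : mexp -> mexp := ren_e (fun j => j + m).

(* A substitution maps each variable to a variable or to a (meta-)procedure;
   a variable x applied to Qs and replaced by procedure P becomes  P Qs. *)
Inductive sres : Type := SVar (v : var) | SProc (p : mproc).

Definition shift_sres (m : nat) (s : sres) : sres :=
  match s with
  | SVar (Bnd j) => SVar (Bnd (j + m))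
  | SVar (Free a) => SVar (Free a)
  | SProc p => SProc (shift_p m p)
  end.

Definition upsub (m : nat) (sg : var -> sres) (v : var) : sres :=
  match v with
  | Bnd j => if j <? m then SVar (Bnd j) else shift_sres m (sg (Bnd (j - m)))
  | Free a => shift_sres m (sg (Free a))
  end.

CoFixpoint subst_p (sg : var -> sres) (p : mproc) : mproc :=
  match p with MLam ts e => MLam ts (subst_e (upsub (length ts) sg) e) end
with subst_e (sg : var -> sres) (e : mexp) : mexp :=
  match e with
  | MBot => MBot
  | MNum n => MNum n
  | MCase h br => MCase (subst_h sg h) (fun i => subst_e sg (br i))
  end
with subst_h (sg : var -> sres) (h : mhead) : mhead :=
  match h with
  | HVar v a =>
      match sg v with
      | SVar v' => HVar v' (subst_a sg a)
      | SProc q => HApp q (subst_a sg a)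
      end
  | HApp p a => HApp (subst_p sg p) (subst_a sg a)
  | HExp e => HExp (subst_e sg e)
  end
with subst_a (sg : var -> sres) (a : margs) : margs :=
  match a with
  | ANil => ANil
  | ACons p a' => ACons (subst_p sg p) (subst_a sg a')
  end.

Definition beta_sub (r : nat) (a : margs) (v : var) : sres :=
  match v with
  | Bnd j => if j <? r then SProc (anth a (r - 1 - j)) else SVar (Bnd (j - r))
  | Free x => SVar (Free x)
  end.

Inductive hstep : mexp -> mexp -> Prop :=
  | hs_bot br : hstep (MCase (HExp MBot) br) MBot
  | hs_num n br : hstep (MCase (HExp (MNum n)) br) (br n)
  | hs_cc h br' br :
      hstep (MCase (HExp (MCase h br')) br) (MCase h (fun i => MCase (HExp (br' i)) br))
  | hs_beta ts e a br :
      alen a (length ts) ->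
      hstep (MCase (HApp (MLam ts e) a) br)
            (MCase (HExp (subst_e (beta_sub (length ts) a) e)) br).

Definition hsteps : mexp -> mexp -> Prop := clos_refl_trans mexp hstep.

(* Evaluation <<E>> (as a relation: the limit of reduction).  *)
CoInductive evalP : mproc -> mproc -> Prop :=
  | ev_lam ts e e' : evalE e e' -> evalP (MLam ts e) (MLam ts e')
with evalE : mexp -> mexp -> Prop :=
  | ev_num E n : hsteps E (MNum n) -> evalE E (MNum n)
  | ev_case E v a br a' br' :
      hsteps E (MCase (HVar v a) br) -> evalA a a' ->
      (forall i, evalE (br i) (br' i)) -> evalE E (MCase (HVar v a') br')
  | ev_bot E :
      (forall n, ~ hsteps E (MNum n)) ->
      (forall v a br, ~ hsteps E (MCase (HVar v a) br)) -> evalE E MBot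
with evalA : margs -> margs -> Prop :=
  | ev_nil : evalA ANil ANil
  | ev_cons p p' a a' : evalP p p' -> evalA a a' -> evalA (ACons p a) (ACons p' a').

CoInductive bisimP : mproc -> mproc -> Prop :=
  | bs_lam ts e e' : bisimE e e' -> bisimP (MLam ts e) (MLam ts e')
with bisimE : mexp -> mexp -> Prop :=
  | bs_bot : bisimE MBot MBot
  | bs_num n : bisimE (MNum n) (MNum n)
  | bs_case h h' br br' :
      bisimH h h' -> (forall i, bisimE (br i) (br' i)) -> bisimE (MCase h br) (MCase h' br')
with bisimH : mhead -> mhead -> Prop :=
  | bs_var v a a' : bisimA a a' -> bisimH (HVar v a) (HVar v a')
  | bs_app p p' a a' : bisimP p p' -> bisimA a a' -> bisimH (HApp p a) (HApp p' a')
  | bs_exp e e' : bisimE e e' -> bisimH (HExp e) (HExp e')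
with bisimA : margs -> margs -> Prop :=
  | bs_nil : bisimA ANil ANil
  | bs_cons p p' a a' : bisimP p p' -> bisimA a a' -> bisimA (ACons p a) (ACons p' a').

CoInductive mleP : mproc -> mproc -> Prop :=
  | le_lam ts e e' : mleE e e' -> mleP (MLam ts e) (MLam ts e')
with mleE : mexp -> mexp -> Prop :=
  | le_bot e : mleE MBot e
  | le_num n : mleE (MNum n) (MNum n)
  | le_case h h' br br' :
      mleH h h' -> (forall i, mleE (br i) (br' i)) -> mleE (MCase h br) (MCase h' br')
with mleH : mhead -> mhead -> Prop :=
  | le_hbot h : mleH (HExp MBot) h
  | le_var v a a' : mleA a a' -> mleH (HVar v a) (HVar v a')
  | le_app p p' a a' : mleP p p' -> mleA a a' -> mleH (HApp p a) (HApp p' a')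
  | le_exp e e' : mleE e e' -> mleH (HExp e) (HExp e')
with mleA : margs -> margs -> Prop :=
  | le_nil : mleA ANil ANil
  | le_cons p p' a a' : mleP p p' -> mleA a a' -> mleA (ACons p a) (ACons p' a').

Definition is_lub (T : nat -> mexp) (L : mexp) : Prop :=
  (forall m, mleE (T m) L) /\
  (forall U, (forall m, mleE (T m) U) -> mleE L U).

(* Rightward leaf substitution t[i |-> e_i] (only through lambda bodies
   and case branches; e_i are shifted under binders).                  *)
CoFixpoint rsub_e (f : nat -> mexp) (d : nat) (e : mexp) : mexp :=
  match e with
  | MBot => MBot
  | MNum i => shift_e d (f i)
  | MCase h br => MCase h (fun i => rsub_e f d (br i))
  end.

Definition rsub_p (f : nat -> mexp) (d : nat) (p : mproc) : mproc :=
  match p with MLam ts e => MLam ts (rsub_e f (d + length ts) e) end.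

Definition rsub (f : nat -> mexp) (p : mproc) : mproc := rsub_p f 0 p.

Definition ofopt (o : option nat) : mexp :=
  match o with Some n => MNum n | None => MBot end.

(* Plugging  Pi_{Gamma,Z}(e, xi)  for the procedure  \ z xs . e  where
   z : sigma = sigmas -> N, r = |sigmas|.  In e, z has index r and x_i has
   index r-1-i.  xi(z) = \xs.e, xi(x_i) = q_i.                          *)
Definition plug_sub (sigmas : list ty) (e : mexp) (qs : margs) (v : var) : sres :=
  let r := length sigmas in
  match v with
  | Bnd j =>
      if j <? r then SProc (shift_p (S r) (anth qs (r - 1 - j)))
      else if j =? r then SProc (shift_p r (MLam sigmas e))
      else SVar (Bnd j)
  | Free a => SVar (Free a)
  end.

Definition Pi_iter (sigmas : list ty) (e : mexp) (qs : margs) (m : nat) : mexp :=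
  Nat.iter m (subst_e (plug_sub sigmas e qs)) e.

(* T° : replace every ground subterm  z Qs  (z in Z = {z, x_0..x_{r-1}},
   i.e. indices d..d+r at binding depth d) by bot.                    *)
CoFixpoint circ_p (r d : nat) (p : mproc) : mproc :=
  match p with MLam ts e => MLam ts (circ_e r (d + length ts) e) end
with circ_e (r d : nat) (e : mexp) : mexp :=
  match e with
  | MBot => MBot
  | MNum n => MNum n
  | MCase h br => MCase (circ_h r d h) (fun i => circ_e r d (br i))
  end
with circ_h (r d : nat) (h : mhead) : mhead :=
  match h with
  | HVar (Bnd j) a =>
      if (d <=? j) && (j <=? d + r) then HExp MBot else HVar (Bnd j) (circ_a r d a)
  | HVar (Free x) a => HVar (Free x) (circ_a r d a)
  | HApp p a => HApp (circ_p r d p) (circ_a r d a)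
  | HExp e => HExp (circ_e r d e)
  end
with circ_a (r d : nat) (a : margs) : margs :=
  match a with
  | ANil => ANil
  | ACons p a' => ACons (circ_p r d p) (circ_a r d a')
  end.

Definition Plug (sigmas : list ty) (e : mexp) (qs : margs) (P : mexp) : Prop :=
  is_lub (fun m => circ_e (length sigmas) 0 (Pi_iter sigmas e qs m)) P.

Definition abs_sub (n : nat) (x : atom) (v : var) : sres :=
  match v with
  | Free a => if excluded_middle_informative (a = x) then SVar (Bnd n) else SVar (Free a)
  | Bnd j => if j <? n then SVar (Bnd j) else SVar (Bnd (S j))
  end.

Definition abs (x : atom) (p : mproc) : mproc :=
  match p with MLam ts e => MLam (aty x :: ts) (subst_e (abs_sub (length ts) x) e) end.

Definition app_sub (n : nat) (q : mproc) (v : var) : sres :=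
  match v with
  | Bnd j => if j <? n then SVar (Bnd j)
             else if j =? n then SProc (shift_p n q) else SVar (Bnd (j - 1))
  | Free a => SVar (Free a)
  end.

Inductive app_rel : mproc -> mproc -> mproc -> Prop :=
  | app_intro t0 ts e q e' :
      evalE (subst_e (app_sub (length ts) q) e) e' ->
      app_rel (MLam (t0 :: ts) e) q (MLam ts e').

(* eta-expansion of a variable of type tau; hv m is the head variable seen
   under m extra binders.  x^eta = \zs. case x zs^eta of (i => i).       *)
Fixpoint eta (tau : ty) (hv : nat -> var) {struct tau} : mproc :=
  match tau with
  | Arrs us =>
      let r := length us in
      MLam us (MCase (HVar (hv r)
                 ((fix mk (l : list ty) (j : nat) : margs :=
                     match l with
                     | [] => ANil
                     | u :: l' => ACons (eta u (fun m => Bnd (r - 1 - j + m))) (mk l' (S j))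
                     end) us 0))
               (fun i => MNum i))
  end.

Definition eta_atom (x : atom) : mproc := eta (aty x) (fun _ => Free x).

(* arguments z_0^eta .. z_{r-1}^eta for the r binders just introduced *)
Fixpoint eta_args (r : nat) (l : list ty) (j : nat) : margs :=
  match l with
  | [] => ANil
  | u :: l' => ACons (eta u (fun m => Bnd (r - 1 - j + m))) (eta_args r l' (S j))
  end.

Definition num_proc (n : nat) : mproc := MLam [] (MNum n).
Definition suc_proc : mproc :=
  MLam [tN] (MCase (HVar (Bnd 0) ANil) (fun i => MNum (S i))).
Definition pre_proc : mproc :=
  MLam [tN] (MCase (HVar (Bnd 0) ANil) (fun i => MNum (Nat.pred i))).
Definition ifzero_proc : mproc :=
  MLam [tN; tN; tN]
    (MCase (HVar (Bnd 2) ANil)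
       (fun i => match i with
                 | 0 => MCase (HVar (Bnd 1) ANil) (fun j => MNum j)
                 | S _ => MCase (HVar (Bnd 0) ANil) (fun j => MNum j)
                 end)).
Definition oracle_proc (f : nat -> option nat) : mproc :=
  MLam [tN] (MCase (HVar (Bnd 0) ANil) (fun i => ofopt (f i))).

(* Y_sigma = \ f zs. case f (Y f) zs^eta of (i => i), unfolded:
   Yq fidx = \ys. case f (Yq ..) ys^eta of (i => i), f having index fidx. *)
CoFixpoint Yq (sigmas : list ty) (fidx : nat) : mproc :=
  MLam sigmas
    (MCase (HVar (Bnd (fidx + length sigmas))
              (ACons (Yq sigmas (fidx + length sigmas))
                     (eta_args (length sigmas) sigmas 0)))
           (fun i => MNum i)).

Definition Y_proc (sigma : ty) : mproc :=
  match sigma with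
  | Arrs sigmas =>
      let r := length sigmas in
      MLam (arrow sigma sigma :: sigmas)
        (MCase (HVar (Bnd r) (ACons (Yq sigmas r) (eta_args r sigmas 0)))
               (fun i => MNum i))
  end.

Inductive pcf : Type :=
  | PVar (x : atom)
  | PLam (x : atom) (M : pcf)
  | PApp (M N : pcf)
  | PNum (n : nat)
  | PSuc | PPre | PIfz
  | POracle (f : nat -> option nat)
  | PY (sigma : ty).

(* den k G M tau p :  G |- M : tau  is a PCF^Omega_k term and [[M]]_G = p *)
Inductive den (k : nat) : list atom -> pcf -> ty -> mproc -> Prop :=
  | den_var G x : In x G -> den k G (PVar x) (aty x) (eta_atom x)
  | den_lam G x M tau p :
      ~ In x G -> den k (x :: G) M tau p -> den k G (PLam x M) (arrow (aty x) tau) (abs x p)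
  | den_app G M N s tau p q r :
      den k G M (arrow s tau) p -> den k G N s q -> app_rel p q r -> den k G (PApp M N) tau r
  | den_num G n : den k G (PNum n) tN (num_proc n)
  | den_suc G : den k G PSuc (arrow tN tN) suc_proc
  | den_pre G : den k G PPre (arrow tN tN) pre_proc
  | den_ifz G : den k G PIfz (arrow tN (arrow tN (arrow tN tN))) ifzero_proc
  | den_oracle G f : den k G (POracle f) (arrow tN tN) (oracle_proc f)
  | den_Y G sigma : lv sigma <= k -> den k G (PY sigma) (arrow (arrow sigma sigma) sigma) (Y_proc sigma).

Definition denotable (k : nat) (G : list atom) (t : mproc) : Prop :=
  exists M tau p, den k G M tau p /\ bisimP p t.

(* The six generation rules (derivations are objects, in Type).        *)
Inductive Gen (k : nat) : list atom -> mproc -> Type :=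
  | Gen1 G x qs sigmas p :
      In x G -> aty x = Arrs sigmas -> GenL k G qs sigmas ->
      bisimP (MLam [] (MCase (HVar (Free x) qs) (fun j => MNum j))) p -> Gen k G p
  | Gen2 G x p p' :
      ~ In x G -> Gen k (x :: G) p -> bisimP (abs x p) p' -> Gen k G p'
  | Gen3 G n p :
      bisimP (MLam [] (MNum n)) p -> Gen k G p
  | Gen4 G p (f : nat -> option nat) p' :
      Gen k G p -> bisimP (rsub (fun i => ofopt (f i)) p) p' -> Gen k G p'
  | Gen5 G p d e p' :
      Gen k G p -> Gen k G (MLam [] d) -> Gen k G (MLam [] e) ->
      bisimP (rsub (fun i => match i with 0 => d | S _ => e end) p) p' -> Gen k G p'
  | Gen6 G sigmas e qs P t p' :
      lv (Arrs sigmas) <= k ->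
      Gen k G (MLam (Arrs sigmas :: sigmas) e) -> GenL k G qs sigmas ->
      Plug sigmas e qs P -> evalE P t -> bisimP (MLam [] t) p' -> Gen k G p'
with GenL (k : nat) : list atom -> margs -> list ty -> Type :=
  | GenL0 G : GenL k G ANil []
  | GenL1 G q qs s sigmas :
      Gen k G q -> ptype q = s -> GenL k G qs sigmas -> GenL k G (ACons q qs) (s :: sigmas).

Fixpoint allG (k : nat) (P : list atom -> mproc -> Prop) (G : list atom) (p : mproc)
  (D : Gen k G p) {struct D} : Prop :=
  P G p /\
  match D with
  | @Gen1 _ _ _ _ _ _ _ _ L _ => allL P L
  | @Gen2 _ _ _ _ _ _ D' _ => allG P D'
  | @Gen3 _ _ _ _ _ => True
  | @Gen4 _ _ _ _ _ D' _ => allG P D'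
  | @Gen5 _ _ _ _ _ _ D1 D2 D3 _ => allG P D1 /\ allG P D2 /\ allG P D3
  | @Gen6 _ _ _ _ _ _ _ _ _ D' L _ _ _ => allG P D' /\ allL P L
  end
with allL (k : nat) (P : list atom -> mproc -> Prop) (G : list atom) (qs : margs)
  (sigmas : list ty) (L : GenL k G qs sigmas) {struct L} : Prop :=
  match L with
  | @GenL0 _ _ => True
  | @GenL1 _ _ _ _ _ _ D _ L' => allG P D /\ allL P L'
  end.

(* occurrences (reached by a finite path) of binder lists / variables *)
Inductive occP (Pl : list ty -> Prop) (Pv : var -> Prop) : mproc -> Prop :=
  | oc_lam ts e : Pl ts -> occP Pl Pv (MLam ts e)
  | oc_body ts e : occE Pl Pv e -> occP Pl Pv (MLam ts e)
with occE (Pl : list ty -> Prop) (Pv : var -> Prop) : mexp -> Prop :=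
  | oc_head h br : occH Pl Pv h -> occE Pl Pv (MCase h br)
  | oc_br h br i : occE Pl Pv (br i) -> occE Pl Pv (MCase h br)
with occH (Pl : list ty -> Prop) (Pv : var -> Prop) : mhead -> Prop :=
  | oc_var v a : Pv v -> occH Pl Pv (HVar v a)
  | oc_vargs v a : occA Pl Pv a -> occH Pl Pv (HVar v a)
  | oc_app p a : occP Pl Pv p -> occH Pl Pv (HApp p a)
  | oc_appargs p a : occA Pl Pv a -> occH Pl Pv (HApp p a)
  | oc_exp e : occE Pl Pv e -> occH Pl Pv (HExp e)
with occA (Pl : list ty -> Prop) (Pv : var -> Prop) : margs -> Prop :=
  | oc_hd p a : occP Pl Pv p -> occA Pl Pv (ACons p a)
  | oc_tl p a : occA Pl Pv a -> occA Pl Pv (ACons p a).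

Definition bound_var_type (tau : ty) (p : mproc) : Prop :=
  occP (fun ts => In tau ts) (fun _ => False) p.
Definition free_var (x : atom) (p : mproc) : Prop :=
  occP (fun _ => False) (fun v => v = Free x) p.

Definition env_regular (k : nat) (g : atom) (G : list atom) : Prop :=
  In g G /\ forall a, In a G -> a <> g -> lv (aty a) <= k.

Definition term_regular (k : nat) (g : atom) (p : mproc) : Prop :=
  (forall tau, bound_var_type tau p -> lv tau <= k) /\
  (forall a, free_var a p -> a = g \/ lv (aty a) <= k).

Definition g_regular (k : nat) (g : atom) (G : list atom) (p : mproc) : Prop :=
  env_regular k g G /\ term_regular k g p.

(* A derivation never creates an occurrence of a binder of level > k or of a free
   variable other than g of level > k: each rule builds its conclusion out of material of
   its premises by renaming, substitution, leaf replacement, truncation, least upper bounds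
   and evaluation, all of which only copy binders and variables, and bisimilar trees have
   the same occurrences.  The environment stays g-regular because the only rule that
   extends it, abstraction, produces a procedure of type level <= k + 1, so the abstracted
   variable has level <= k.  That every procedure in the derivation has type level <= k + 1
   propagates from the root: the arguments of g have level <= k + 1, and the plugging rule
   only involves types of level <= k. *)

From Stdlib Require Import List Arith ClassicalDescription Classical Lia.
Import ListNotations.

(* Cofixpoints unfold only when they are the scrutinee of a match; rewriting with the
   identity matches [frob*] below forces one unfolding step. *)
Definition frobP (p : mproc) : mproc := match p with MLam ts e => MLam ts e end.
Definition frobE (e : mexp) : mexp :=
  match e with MBot => MBot | MNum n => MNum n | MCase h br => MCase h br end.
Definition frobH (h : mhead) : mhead :=
  match h with HVar v a => HVar v a | HApp p a => HApp p a | HExp e => HExp e end.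
Definition frobA (a : margs) : margs :=
  match a with ANil => ANil | ACons p a => ACons p a end.

Lemma frobP_eq p : p = frobP p. Proof. destruct p; reflexivity. Qed.
Lemma frobE_eq e : e = frobE e. Proof. destruct e; reflexivity. Qed.
Lemma frobH_eq h : h = frobH h. Proof. destruct h; reflexivity. Qed.
Lemma frobA_eq a : a = frobA a. Proof. destruct a; reflexivity. Qed.

Ltac unfold_cofix H :=
  match type of H with _ = ?T =>
    first [ rewrite (frobP_eq T) in H | rewrite (frobE_eq T) in H
          | rewrite (frobH_eq T) in H | rewrite (frobA_eq T) in H ]
  end; simpl in H.

Ltac invert_image H :=
  match type of H with _ = ?F ?t => is_var t; destruct t end;
  unfold_cofix H;
  repeat match type of H with
    | context [match ?s with _ => _ end] =>
        lazymatch s with context [match _ with _ => _ end] => fail | _ => idtac end;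
        first [is_var s; destruct s | let E := fresh "E" in destruct s eqn:E]; simpl in H
    end;
  try discriminate H; inversion H; subst; clear H.

Scheme occP_mut := Minimality for occP Sort Prop
with occE_mut := Minimality for occE Sort Prop
with occH_mut := Minimality for occH Sort Prop
with occA_mut := Minimality for occA Sort Prop.
Combined Scheme occ_mut from occP_mut, occE_mut, occH_mut, occA_mut.

Section Occurrences.
Variables (Pl : list ty -> Prop) (Pv : var -> Prop).
Hypothesis bound_not_bad : forall j, ~ Pv (Bnd j).

Lemma occ_ren :
 (forall x, occP Pl Pv x -> forall rho p, x = ren_p rho p -> occP Pl Pv p) /\
 (forall x, occE Pl Pv x -> forall rho e, x = ren_e rho e -> occE Pl Pv e) /\
 (forall x, occH Pl Pv x -> forall rho h, x = ren_h rho h -> occH Pl Pv h) /\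
 (forall x, occA Pl Pv x -> forall rho a, x = ren_a rho a -> occA Pl Pv a).
Proof.
  apply occ_mut; intros; match goal with H : _ = _ |- _ => invert_image H end;
    try solve [econstructor; eauto].
  destruct v0; simpl in *; [constructor; auto | exfalso; eapply bound_not_bad; eauto].
Qed.

Definition subst_reflects (sg : var -> sres) : Prop :=
  forall v, match sg v with SVar v' => Pv v' -> Pv v | SProc p => ~ occP Pl Pv p end.

Lemma occ_shift_p m p : occP Pl Pv (shift_p m p) -> occP Pl Pv p.
Proof. intros H. exact (proj1 occ_ren _ H _ _ eq_refl). Qed.

Lemma subst_reflects_upsub sg m : subst_reflects sg -> subst_reflects (upsub m sg).
Proof.
  intros H [a|j]; simpl.
  - specialize (H (Free a)); destruct (sg (Free a)) as [[b|i]|p]; simpl;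
      [auto | intros []%bound_not_bad | eauto using occ_shift_p].
  - destruct (j <? m); simpl; [intros []%bound_not_bad|].
    specialize (H (Bnd (j - m))); destruct (sg (Bnd (j - m))) as [[b|i]|p]; simpl;
      [intros Hb; destruct (bound_not_bad _ (H Hb)) | intros []%bound_not_bad
      | eauto using occ_shift_p].
Qed.

Lemma occ_subst :
 (forall x, occP Pl Pv x -> forall sg p, subst_reflects sg -> x = subst_p sg p -> occP Pl Pv p) /\
 (forall x, occE Pl Pv x -> forall sg e, subst_reflects sg -> x = subst_e sg e -> occE Pl Pv e) /\
 (forall x, occH Pl Pv x -> forall sg h, subst_reflects sg -> x = subst_h sg h -> occH Pl Pv h) /\
 (forall x, occA Pl Pv x -> forall sg a, subst_reflects sg -> x = subst_a sg a -> occA Pl Pv a).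
Proof.
  apply occ_mut; intros; match goal with H : _ = _ |- _ => invert_image H end;
    try solve [econstructor; eauto using subst_reflects_upsub].
  all: match goal with H : subst_reflects ?sg, E : ?sg ?v = _ |- _ => specialize (H v); rewrite E in H end;
    solve [constructor; auto | exfalso; auto].
Qed.

Lemma occ_circ :
 (forall x, occP Pl Pv x -> forall r d p, x = circ_p r d p -> occP Pl Pv p) /\
 (forall x, occE Pl Pv x -> forall r d e, x = circ_e r d e -> occE Pl Pv e) /\
 (forall x, occH Pl Pv x -> forall r d h, x = circ_h r d h -> occH Pl Pv h) /\
 (forall x, occA Pl Pv x -> forall r d a, x = circ_a r d a -> occA Pl Pv a).
Proof.
  apply occ_mut; intros; match goal with H : _ = _ |- _ => invert_image H end;
    solve [econstructor; eauto | match goal with H : occE _ _ MBot |- _ => inversion H end].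
Qed.

Lemma occ_bisim :
 (forall x, occP Pl Pv x -> forall p, bisimP p x -> occP Pl Pv p) /\
 (forall x, occE Pl Pv x -> forall e, bisimE e x -> occE Pl Pv e) /\
 (forall x, occH Pl Pv x -> forall h, bisimH h x -> occH Pl Pv h) /\
 (forall x, occA Pl Pv x -> forall a, bisimA a x -> occA Pl Pv a).
Proof.
  apply occ_mut; intros;
    match goal with H : bisimP _ _ |- _ => inversion H | H : bisimE _ _ |- _ => inversion H
      | H : bisimH _ _ |- _ => inversion H | H : bisimA _ _ |- _ => inversion H end; subst;
    solve [econstructor; eauto].
Qed.

Lemma occ_mle :
 (forall x, occP Pl Pv x -> forall y, mleP x y -> occP Pl Pv y) /\
 (forall x, occE Pl Pv x -> forall y, mleE x y -> occE Pl Pv y) /\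
 (forall x, occH Pl Pv x -> forall y, mleH x y -> occH Pl Pv y) /\
 (forall x, occA Pl Pv x -> forall y, mleA x y -> occA Pl Pv y).
Proof.
  apply occ_mut; intros;
    match goal with H : mleP _ _ |- _ => inversion H | H : mleE _ _ |- _ => inversion H
      | H : mleH _ _ |- _ => inversion H | H : mleA _ _ |- _ => inversion H end; subst;
    solve [econstructor; eauto | match goal with H : occE _ _ MBot |- _ => inversion H end].
Qed.

(* Out of range, [anth] returns the junk procedure [MLam [] MBot]. *)
Lemma occ_anth n a : occP Pl Pv (anth a n) -> occA Pl Pv a \/ Pl [].
Proof.
  revert a; induction n as [|n IH]; intros [|p a] H; simpl in H.
  1,3: inversion H; subst; auto; match goal with H : occE _ _ MBot |- _ => inversion H end.
  - left; constructor; auto.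
  - destruct (IH a H); auto using oc_tl.
Qed.

Lemma rsub_e_unfold f d e :
  rsub_e f d e =
    match e with
    | MBot => MBot
    | MNum i => shift_e d (f i)
    | MCase h br => MCase h (fun i => rsub_e f d (br i))
    end.
Proof.
  rewrite (frobE_eq (rsub_e f d e)); destruct e; simpl; [reflexivity | | reflexivity].
  symmetry; apply frobE_eq.
Qed.

Lemma occ_rsub_e f x :
  occE Pl Pv x -> forall d e, x = rsub_e f d e -> occE Pl Pv e \/ exists i, occE Pl Pv (f i).
Proof.
  induction 1 as [h br Hh | h br i Hi IH]; intros d [|n|h' br'] Heq;
    rewrite rsub_e_unfold in Heq; try discriminate Heq.
  - right; exists n; apply (proj1 (proj2 occ_ren) _ (oc_head br Hh) _ _ Heq).
  - injection Heq as -> ->; left; constructor; auto.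
  - right; exists n; apply (proj1 (proj2 occ_ren) _ (oc_br h br i Hi) _ _ Heq).
  - injection Heq as -> ->; destruct (IH d (br' i) eq_refl) as [H|H]; auto.
    left; eapply oc_br; eauto.
Qed.

Lemma occ_rsub f p : occP Pl Pv (rsub f p) -> occP Pl Pv p \/ exists i, occE Pl Pv (f i).
Proof.
  destruct p as [ts e]; intros H; inversion H as [? ? Hl | ? ? He]; subst; auto using oc_lam.
  destruct (occ_rsub_e f _ He _ _ eq_refl); auto using oc_body.
Qed.

Hypothesis nil_not_bad : ~ Pl [].

Lemma hstep_absence E E' : hstep E E' -> ~ occE Pl Pv E -> ~ occE Pl Pv E'.
Proof.
  intros Hs HE HE'; apply HE; destruct Hs as [br|n br|h br' br|ts e a br Ha].
  - inversion HE'.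
  - eapply oc_br; eauto.
  - inversion HE' as [? ? Hh|? ? i Hi]; subst.
    + apply oc_head, oc_exp, oc_head; auto.
    + inversion Hi as [? ? Hh'|? ? j Hj]; subst.
      * inversion Hh'; subst; apply oc_head, oc_exp; eapply oc_br; eauto.
      * eapply oc_br; eauto.
  - inversion HE' as [? ? Hh|? ? i Hi]; subst; [|eapply oc_br; eauto].
    inversion Hh as [| | | |? Hs]; subst.
    destruct (classic (occA Pl Pv a)) as [Hoa|Hoa]; [apply oc_head, oc_appargs; auto|].
    apply oc_head, oc_app, oc_body.
    refine (proj1 (proj2 occ_subst) _ Hs _ _ _ eq_refl).
    intros [x|j]; simpl; auto.
    destruct (j <? length ts); simpl; [|intros []%bound_not_bad].
    intros Hc; destruct (occ_anth _ _ Hc); auto.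
Qed.

Lemma hsteps_absence E E' : hsteps E E' -> ~ occE Pl Pv E -> ~ occE Pl Pv E'.
Proof. induction 1; eauto using hstep_absence. Qed.

Lemma occ_eval :
 (forall x, occP Pl Pv x -> forall p, evalP p x -> occP Pl Pv p) /\
 (forall x, occE Pl Pv x -> forall E, evalE E x -> occE Pl Pv E) /\
 (forall x, occH Pl Pv x -> forall v a a', x = HVar v a' -> evalA a a' -> occH Pl Pv (HVar v a)) /\
 (forall x, occA Pl Pv x -> forall a, evalA a x -> occA Pl Pv a).
Proof.
  apply occ_mut.
  - intros ts e Hl p Hev; inversion Hev; subst; apply oc_lam; auto.
  - intros ts e _ IH p Hev; inversion Hev; subst; apply oc_body; auto.
  - intros h br _ IH E Hev; apply NNPP; intros HE.
    inversion Hev as [|? v a ? a' ? Hs Ha _|]; subst.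
    eapply hsteps_absence; [exact Hs | exact HE | apply oc_head; eauto].
  - intros h br i _ IH E Hev; apply NNPP; intros HE.
    inversion Hev as [|? v a ? a' br' Hs _ Hbr|]; subst.
    eapply hsteps_absence; [exact Hs | exact HE | eapply oc_br; eauto].
  - intros v a Hv v' a0 a' Heq _; injection Heq as -> ->; apply oc_var; auto.
  - intros v a _ IH v' a0 a' Heq Ha; injection Heq as -> ->; apply oc_vargs; auto.
  - discriminate.
  - discriminate.
  - discriminate.
  - intros p a _ IH a0 Ha; inversion Ha; subst; apply oc_hd; auto.
  - intros p a _ IH a0 Ha; inversion Ha; subst; apply oc_tl; auto.
Qed.

(* Pruning keeps binder lists, so a bad binder list at the top of an argument can only be
   removed by cutting the whole head in which that argument occurs. *)
Definition binders_bad (p : mproc) : Prop := match p with MLam ts _ => Pl ts end.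

Inductive args_bad : margs -> Prop :=
  | args_bad_hd p a : binders_bad p -> args_bad (ACons p a)
  | args_bad_tl p a : args_bad a -> args_bad (ACons p a).

Definition head_bad (h : mhead) : Prop :=
  match h with
  | HVar v a => Pv v \/ args_bad a
  | HApp p a => binders_bad p \/ args_bad a
  | HExp _ => False
  end.

CoFixpoint prune_p (p : mproc) : mproc :=
  match p with MLam ts e => MLam ts (prune_e e) end
with prune_e (e : mexp) : mexp :=
  match e with
  | MBot => MBot
  | MNum n => MNum n
  | MCase h br => MCase (prune_h h) (fun i => prune_e (br i))
  end
with prune_h (h : mhead) : mhead :=
  if excluded_middle_informative (head_bad h) then HExp MBot else
  match h with
  | HVar v a => HVar v (prune_a a)
  | HApp p a => HApp (prune_p p) (prune_a a)
  | HExp e => HExp (prune_e e)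
  end
with prune_a (a : margs) : margs :=
  match a with
  | ANil => ANil
  | ACons p a' => ACons (prune_p p) (prune_a a')
  end.

Lemma prune_h_unfold h :
  prune_h h =
    if excluded_middle_informative (head_bad h) then HExp MBot else
    match h with
    | HVar v a => HVar v (prune_a a)
    | HApp p a => HApp (prune_p p) (prune_a a)
    | HExp e => HExp (prune_e e)
    end.
Proof. rewrite (frobH_eq (prune_h h)); simpl; destruct excluded_middle_informative, h; auto. Qed.

Lemma args_bad_mle a : args_bad a -> forall a', mleA a' a -> args_bad a'.
Proof.
  induction 1 as [p a Hp|p a _ IH]; intros a' Hm; inversion Hm as [|p' ? ? a'' Hpp]; subst.
  - apply args_bad_hd; destruct Hpp; auto.
  - apply args_bad_tl; auto.
Qed.

Lemma occ_args_bad a : args_bad a -> occA Pl Pv a.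
Proof. induction 1 as [[ts e]| ]; auto using oc_hd, oc_tl, oc_lam. Qed.

Lemma mle_prune_p x y : mleP x y -> ~ occP Pl Pv x -> mleP x (prune_p y)
with mle_prune_e x y : mleE x y -> ~ occE Pl Pv x -> mleE x (prune_e y)
with mle_prune_h x y : mleH x y -> ~ occH Pl Pv x -> mleH x (prune_h y)
with mle_prune_a x y : mleA x y -> ~ occA Pl Pv x -> mleA x (prune_a y).
Proof.
  - intros [ts e e' He] Hn; rewrite (frobP_eq (prune_p _)); simpl.
    constructor; apply mle_prune_e; auto using oc_body.
  - intros [e|n|h h' br br' Hh Hbr] Hn; rewrite (frobE_eq (prune_e _)); simpl; constructor.
    + apply mle_prune_h; auto using oc_head.
    + intros i; apply mle_prune_e; eauto using oc_br.
  - intros [h|v a a' Ha|p p' a a' Hp Ha|e e' He] Hn; [constructor| | |];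
      rewrite prune_h_unfold; destruct excluded_middle_informative as [Hb|Hb].
    + exfalso; destruct Hb as [Hv|Hb]; [apply Hn, oc_var; auto|].
      apply Hn, oc_vargs, occ_args_bad; eapply args_bad_mle; eauto.
    + constructor; apply mle_prune_a; auto using oc_vargs.
    + exfalso; destruct Hb as [Hb|Hb].
      * destruct Hp; apply Hn, oc_app, oc_lam; auto.
      * apply Hn, oc_appargs, occ_args_bad; eapply args_bad_mle; eauto.
    + constructor; [apply mle_prune_p | apply mle_prune_a]; auto using oc_app, oc_appargs.
    + destruct Hb.
    + constructor; apply mle_prune_e; auto using oc_exp.
  - intros [|p p' a a' Hp Ha] Hn; rewrite (frobA_eq (prune_a _)); simpl; constructor;
      auto using oc_hd, oc_tl.
Qed.

Lemma occ_prune :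
 (forall x, occP Pl Pv x -> forall p, x = prune_p p -> binders_bad p) /\
 (forall x, occE Pl Pv x -> forall e, x = prune_e e -> False) /\
 (forall x, occH Pl Pv x -> forall h, x = prune_h h -> False) /\
 (forall x, occA Pl Pv x -> forall a, x = prune_a a -> args_bad a).
Proof.
  apply occ_mut; intros; match goal with H : _ = _ |- _ => invert_image H end.
  all: simpl in *; eauto using args_bad.
  all: exfalso; solve [eauto | match goal with H : occE _ _ MBot |- _ => inversion H end].
Qed.

(* [prune_e P] is an upper bound of the approximants, hence [P <= prune_e P]; occurrences
   propagate upwards along [<=], and pruned trees have none. *)
Lemma lub_absence T P : is_lub T P -> (forall m, ~ occE Pl Pv (T m)) -> ~ occE Pl Pv P.
Proof.
  intros [Hub Hleast] HT Hc.
  assert (Hle : mleE P (prune_e P)) by (apply Hleast; intros m; apply mle_prune_e; auto).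
  exact (proj1 (proj2 occ_prune) _ (proj1 (proj2 occ_mle) _ Hc _ Hle) _ eq_refl).
Qed.

End Occurrences.

Lemma occ_mono (Pl Pl' : list ty -> Prop) (Pv Pv' : var -> Prop) :
  (forall ts, Pl ts -> Pl' ts) -> (forall v, Pv v -> Pv' v) ->
  (forall x, occP Pl Pv x -> occP Pl' Pv' x) /\
  (forall x, occE Pl Pv x -> occE Pl' Pv' x) /\
  (forall x, occH Pl Pv x -> occH Pl' Pv' x) /\
  (forall x, occA Pl Pv x -> occA Pl' Pv' x).
Proof. intros Hl Hv; apply occ_mut; intros; solve [econstructor; eauto | eapply oc_br; eauto]. Qed.

Lemma occ_witness (Pl : list ty -> Prop) (Pv : var -> Prop) :
  (forall x, occP Pl Pv x -> (exists ts, Pl ts /\ occP (eq ts) (fun _ => False) x) \/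
                             (exists v, Pv v /\ occP (fun _ => False) (eq v) x)) /\
  (forall x, occE Pl Pv x -> (exists ts, Pl ts /\ occE (eq ts) (fun _ => False) x) \/
                             (exists v, Pv v /\ occE (fun _ => False) (eq v) x)) /\
  (forall x, occH Pl Pv x -> (exists ts, Pl ts /\ occH (eq ts) (fun _ => False) x) \/
                             (exists v, Pv v /\ occH (fun _ => False) (eq v) x)) /\
  (forall x, occA Pl Pv x -> (exists ts, Pl ts /\ occA (eq ts) (fun _ => False) x) \/
                             (exists v, Pv v /\ occA (fun _ => False) (eq v) x)).
Proof.
  apply occ_mut; intros;
    repeat match goal with H : _ \/ _ |- _ => destruct H as [[? [? ?]]|[? [? ?]]] end;
    solve [left; eexists; split; eauto; solve [econstructor; eauto | eapply oc_br; eauto]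
          | right; eexists; split; eauto; solve [econstructor; eauto | eapply oc_br; eauto]].
Qed.

Definition high_binders (k : nat) (ts : list ty) : Prop := exists tau, In tau ts /\ k < lv tau.
Definition high_atom (k : nat) (g : atom) (v : var) : Prop :=
  exists a, v = Free a /\ a <> g /\ k < lv (aty a).

Definition clean (k : nat) (g : atom) (p : mproc) : Prop :=
  ~ occP (high_binders k) (high_atom k g) p.
Definition clean_args (k : nat) (g : atom) (qs : margs) : Prop :=
  ~ occA (high_binders k) (high_atom k g) qs.

Lemma high_atom_Bnd k g j : ~ high_atom k g (Bnd j).
Proof. intros (a & H & _); discriminate. Qed.

Lemma high_binders_nil k : ~ high_binders k [].
Proof. intros (tau & [] & _). Qed.

Lemma term_regular_clean k g p : term_regular k g p <-> clean k g p.
Proof.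
  split.
  - intros [Hts Hfv] Hc.
    destruct (proj1 (occ_witness _ _) _ Hc) as [(ts & (tau & Hin & Hlv) & Ho)|(v & (a & -> & Hag & Hlv) & Ho)].
    + enough (lv tau <= k) by lia.
      apply Hts; refine (proj1 (occ_mono _ _ _ _ _ _) _ Ho); [intros ? <-; exact Hin | intros _ []].
    + destruct (Hfv a) as [|]; [|contradiction|lia].
      refine (proj1 (occ_mono _ _ _ _ _ _) _ Ho); [intros _ [] | intros ? <-; reflexivity].
  - intros H; split.
    + intros tau Ht; apply Nat.nlt_ge; intros Hlv; apply H.
      refine (proj1 (occ_mono _ _ _ _ _ _) _ Ht); [intros ts Hi; exists tau; auto | intros _ []].
    + intros a Ha; destruct (classic (a = g)) as [|Hag]; [auto|right].
      apply Nat.nlt_ge; intros Hlv; apply H.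
      refine (proj1 (occ_mono _ _ _ _ _ _) _ Ha); [intros _ [] | intros v ->; exists a; auto].
Qed.

Lemma lv_cons s l : lv (Arrs (s :: l)) = Nat.max (S (lv s)) (lv (Arrs l)).
Proof. reflexivity. Qed.

Lemma lv_In t ts : In t ts -> S (lv t) <= lv (Arrs ts).
Proof.
  induction ts as [|s l IH]; [intros []|]; rewrite lv_cons; intros [->|Hi]; [lia|].
  specialize (IH Hi); lia.
Qed.

Lemma lv_Arrs_le n ts : (forall t, In t ts -> lv t <= n) -> lv (Arrs ts) <= S n.
Proof.
  induction ts as [|s l IH]; intros H; [simpl; lia|]; rewrite lv_cons.
  assert (lv s <= n) by (apply H; left; auto).
  assert (lv (Arrs l) <= S n) by (apply IH; intros; apply H; right; auto); lia.
Qed.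

Lemma clean_bisim k g p p' : clean k g p -> bisimP p p' -> clean k g p'.
Proof. intros H Hb Hc; apply H; exact (proj1 (occ_bisim _ _) _ Hc _ Hb). Qed.

Lemma clean_ofopt k g o : clean k g (MLam [] (ofopt o)).
Proof.
  intros Hc; inversion Hc as [? ? Hl|? ? He]; subst; [exact (high_binders_nil _ Hl)|].
  destruct o; inversion He.
Qed.

Lemma clean_case_atom {k g G x qs} :
  env_regular k g G -> In x G -> clean_args k g qs ->
  clean k g (MLam [] (MCase (HVar (Free x) qs) (fun j => MNum j))).
Proof.
  intros [_ HG] Hx Hqs Hc.
  inversion Hc as [? ? Hl|? ? He]; subst; [exact (high_binders_nil _ Hl)|].
  inversion He as [? ? Hh|? ? i Hi]; subst; [|inversion Hi].
  inversion Hh as [? ? (a & Ha & Hag & Hlv)|? ? Ha| | |]; subst; [|contradiction].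
  injection Ha as <-; specialize (HG x Hx Hag); lia.
Qed.

Lemma clean_abs k g x p : lv (aty x) <= k -> clean k g p -> clean k g (abs x p).
Proof.
  destruct p as [ts e]; intros Hx Hp Hc; inversion Hc as [? ? Hl|? ? He]; subst.
  - destruct Hl as (tau & [<-|Hi] & Hlv); [lia|].
    apply Hp, oc_lam; exists tau; auto.
  - apply Hp, oc_body.
    refine (proj1 (proj2 (occ_subst _ _ (high_atom_Bnd k g))) _ He _ _ _ eq_refl).
    intros [a|j]; simpl.
    + destruct excluded_middle_informative; simpl; [intros []%high_atom_Bnd | auto].
    + destruct (j <? length ts); intros []%high_atom_Bnd.
Qed.

Lemma clean_rsub k g f p :
  clean k g p -> (forall i, clean k g (MLam [] (f i))) -> clean k g (rsub f p).
Proof.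
  intros Hp Hf Hc; destruct (occ_rsub _ _ (high_atom_Bnd k g) _ _ Hc) as [|[i Hi]].
  - contradiction.
  - apply (Hf i), oc_body; auto.
Qed.

Lemma clean_tail_binders {k g t ts e} : clean k g (MLam (t :: ts) e) -> clean k g (MLam ts e).
Proof.
  intros H Hc; apply H; inversion Hc as [? ? (tau & Hi & Hlv)|]; subst.
  - apply oc_lam; exists tau; split; [right|]; auto.
  - apply oc_body; auto.
Qed.

Lemma plug_sub_reflects k g sigmas e qs :
  clean k g (MLam sigmas e) -> clean_args k g qs ->
  subst_reflects (high_binders k) (high_atom k g) (plug_sub sigmas e qs).
Proof.
  intros He Hqs [a|j]; simpl; auto.
  destruct (j <? length sigmas); [|destruct (j =? length sigmas)]; simpl.
  - intros Hc; destruct (occ_anth _ _ _ _ (occ_shift_p _ _ (high_atom_Bnd k g) _ _ Hc)) as [|Hl].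
    + contradiction.
    + exact (high_binders_nil _ Hl).
  - intros Hc; exact (He (occ_shift_p _ _ (high_atom_Bnd k g) _ _ Hc)).
  - intros []%high_atom_Bnd.
Qed.

Lemma Plug_absence k g sigmas e qs P :
  clean k g (MLam sigmas e) -> clean_args k g qs -> Plug sigmas e qs P ->
  ~ occE (high_binders k) (high_atom k g) P.
Proof.
  intros He Hqs HP.
  assert (Hiter : forall m, ~ occE (high_binders k) (high_atom k g) (Pi_iter sigmas e qs m)).
  { induction m as [|m IH]; intros Hc; [exact (He (oc_body _ Hc))|].
    exact (IH (proj1 (proj2 (occ_subst _ _ (high_atom_Bnd k g))) _ Hc _ _
                 (plug_sub_reflects _ _ _ _ _ He Hqs) eq_refl)). }
  apply (lub_absence _ _ _ _ HP); intros m Hc.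
  exact (Hiter m (proj1 (proj2 (occ_circ _ _)) _ Hc _ _ _ eq_refl)).
Qed.

Lemma clean_eval k g P t :
  ~ occE (high_binders k) (high_atom k g) P -> evalE P t -> clean k g (MLam [] t).
Proof.
  intros HP Hev Hc; inversion Hc as [? ? Hl|? ? Ht]; subst; [exact (high_binders_nil _ Hl)|].
  exact (HP (proj1 (proj2 (occ_eval _ _ (high_atom_Bnd k g) (high_binders_nil k))) _ Ht _ Hev)).
Qed.

Lemma allG_clean {k} g {G p} (D : Gen k G p) : allG (g_regular k g) D -> clean k g p.
Proof. intros HD; apply term_regular_clean; destruct D; exact (proj2 (proj1 HD)). Qed.

Lemma allL_clean_args {k} g {G qs sigmas} (L : GenL k G qs sigmas) :
  allL (g_regular k g) L -> clean_args k g qs.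
Proof.
  induction L as [G0|G0 q qs0 s sigmas0 D Hs L IH]; simpl; intros HL Hc; inversion Hc; subst.
  - exact (allG_clean g D (proj1 HL) H0).
  - exact (IH (proj2 HL) H0).
Qed.

Lemma ptype_bisim {p p'} : bisimP p p' -> ptype p = ptype p'.
Proof. intros H; inversion H; reflexivity. Qed.

Lemma ptype_rsub f p : ptype (rsub f p) = ptype p.
Proof. destruct p; reflexivity. Qed.

Lemma env_atom_arg_lv {k g G x sigmas s} :
  lv (aty g) <= k + 2 -> env_regular k g G -> In x G -> aty x = Arrs sigmas -> In s sigmas ->
  lv s <= S k.
Proof.
  intros Hg [_ HG] Hx Hxty Hs; pose proof (lv_In _ _ Hs); rewrite <- Hxty in *.
  destruct (classic (x = g)) as [->|Hxg]; [lia|].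
  specialize (HG x Hx Hxg); lia.
Qed.

Lemma lv_ptype_abs {k x p} : lv (ptype (abs x p)) <= S k -> lv (aty x) <= k /\ lv (ptype p) <= S k.
Proof. destruct p as [ts e]; simpl ptype; unfold arrow; rewrite lv_cons; lia. Qed.

Lemma env_regular_cons k g G x :
  lv (aty x) <= k -> env_regular k g G -> env_regular k g (x :: G).
Proof. intros Hx [Hg HG]; split; [right; exact Hg|intros a [<-|Ha] Hag; auto]. Qed.

Lemma g_regular_bisim {k g G p p'} :
  env_regular k g G -> clean k g p -> bisimP p p' -> g_regular k g G p'.
Proof. intros HG Hp Hb; split; [exact HG|]; apply term_regular_clean, (clean_bisim _ _ _ _ Hp Hb). Qed.

Scheme Gen_mut := Induction for Gen Sort Prop
with GenL_mut := Induction for GenL Sort Prop.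

Lemma Gen_regular k g (Hg : lv (aty g) <= k + 2) G p (D : Gen k G p) :
  env_regular k g G -> lv (ptype p) <= S k -> allG (g_regular k g) D.
Proof.
  induction D as [G x qs sigmas p Hx Hxty L IHL Hb | G x p p' Hx D IHD Hb | G n p Hb
                 | G p f p' D IHD Hb | G p d e p' D IHD Dd IHd De IHe Hb
                 | G sigmas e qs P t p' Hlv D IHD L IHL HP Hev Hb | G
                 | G q qs s sigmas D IHD Hq L IHL]
    using Gen_mut with
    (P0 := fun G qs sigmas L => env_regular k g G -> (forall s, In s sigmas -> lv s <= S k) ->
                                 allL (g_regular k g) L);
    intros HG Hty; simpl.
  - assert (HL : allL (g_regular k g) L).
    { apply IHL; [exact HG|]; intros s Hs; exact (env_atom_arg_lv Hg HG Hx Hxty Hs). }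
    split; [|exact HL]; refine (g_regular_bisim HG _ Hb).
    exact (clean_case_atom HG Hx (allL_clean_args g L HL)).
  - rewrite <- (ptype_bisim Hb) in Hty; destruct (lv_ptype_abs Hty) as [Hxlv Hplv].
    assert (HD : allG (g_regular k g) D) by (apply IHD; [apply env_regular_cons|]; auto).
    split; [|exact HD]; refine (g_regular_bisim HG _ Hb).
    apply clean_abs; [exact Hxlv|exact (allG_clean g D HD)].
  - split; [|exact I]; exact (g_regular_bisim HG (clean_ofopt k g (Some n)) Hb).
  - rewrite <- (ptype_bisim Hb), ptype_rsub in Hty.
    assert (HD : allG (g_regular k g) D) by auto.
    split; [|exact HD]; refine (g_regular_bisim HG _ Hb).
    apply clean_rsub; [exact (allG_clean g D HD)|intros i; apply clean_ofopt].
  - rewrite <- (ptype_bisim Hb), ptype_rsub in Hty.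
    assert (HD : allG (g_regular k g) D) by auto.
    assert (Hd : allG (g_regular k g) Dd) by (apply IHd; simpl; auto with arith).
    assert (He : allG (g_regular k g) De) by (apply IHe; simpl; auto with arith).
    split; [|auto]; refine (g_regular_bisim HG _ Hb).
    apply clean_rsub; [exact (allG_clean g D HD)|].
    intros [|i]; [exact (allG_clean g Dd Hd)|exact (allG_clean g De He)].
  - assert (HD : allG (g_regular k g) D).
    { apply IHD; [exact HG|unfold ptype; rewrite lv_cons; lia]. }
    assert (HL : allL (g_regular k g) L).
    { apply IHL; [exact HG|]; intros s Hs; pose proof (lv_In _ _ Hs); lia. }
    split; [|auto]; refine (g_regular_bisim HG _ Hb).
    refine (clean_eval _ _ _ _ (Plug_absence _ _ _ _ _ _ _ (allL_clean_args g L HL) HP) Hev).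
    exact (clean_tail_binders (allG_clean g D HD)).
  - exact I.
  - split; [apply IHD; [exact HG|rewrite Hq; apply Hty; left; auto]|].
    apply IHL; [exact HG|intros; apply Hty; right; auto].
Qed.

Theorem proposition3p11 :
  forall (k : nat) (g : atom) (G : list atom) (t : mproc),
    1 <= k ->
    lv (aty g) = k + 2 ->
    g_regular k g G t ->
    denotable k G t ->
    forall D : Gen k G t, allG (g_regular k g) D.
Proof.
  intros k g G [ts e] _ Hg [HG [Hbinders _]] _ D.
  apply Gen_regular; [lia|exact HG|].
  apply lv_Arrs_le; intros tau Hi; apply Hbinders, oc_lam; exact Hi.
Qed.
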